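(* Let $q$ be a prime power, $r\mid(q-1)$ with $r\ge3$, and $q/2\le\ell\le q-1$. The distance $d$ of the quantum Tamo–Barg code $\mathrm{CSS}(C,C)$ with parameters $q,r,\ell$ satisfies \[ d\leq\left(1-\frac{1}{r}\right)(q-\ell)+5. \]
   Context: $[n]=\{0,\dots,n-1\}$, $\mathbb{F}_q^*=\mathbb{F}_q\setminus\{0\}$. For $S\subseteq\mathbb{Z}_{\ge0}$, $\mathbb{F}_q[X]^S=\{\sum_{i\in S}a_iX^i\}$, $\mathrm{ev}(f)=(f(x))_{x\in\mathbb{F}_q^*}$. Let $S=\{i\in[\ell]:i\not\equiv r-1\pmod r\}\cup\{i\in[q-1]:i\equiv1\pmod r\}$, $C=\mathrm{ev}(\mathbb{F}_q[X]^S)\subseteq\mathbb{F}_q^{q-1}$; for $\ell\ge q/2$, $C^\perp\subseteq C$ and the quantum Tamo–Barg code is the CSS code $\mathrm{CSS}(C,C)=\mathrm{span}\{\sum_{y\in C^\perp}|x+y\rangle:x\in C\}$. Its distance is $\min\{|c|:c\in C\setminus C^\perp\}$, where $|c|$ is the Hamming weight (equivalently, the largest $d$ such that every code state can be recovered after erasing any fewer than $d$ qudits). *)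

From HB Require Import structures.
From mathcomp Require Import all_boot all_order all_algebra all_field.
Set Implicit Arguments. Unset Strict Implicit. Unset Printing Implicit Defensive.
Import Order.TTheory GRing.Theory Num.Theory.
Local Open Scope ring_scope.

Section TamoBarg.
Variable F : finFieldType.

Definition Fstar := {x : F | x != 0}.

Definition vec := {ffun Fstar -> F}.

Definition ev (p : {poly F}) : vec := [ffun x : Fstar => p.[val x]].

Definition hweight (c : vec) : nat := #|[set x : Fstar | c x != 0]|.

Definition inS (q r l i : nat) : bool :=
  ((i < l)%N && (i %% r != (r - 1) %% r)%N) || ((i < q - 1)%N && (i %% r == 1 %% r)%N).

Definition inTB (r l : nat) (c : vec) : Prop :=
  exists p : {poly F}, (forall i : nat, ~~ inS #|F| r l i -> p`_i = 0) /\ c = ev p.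

Definition inTBperp (r l : nat) (y : vec) : Prop :=
  forall c : vec, inTB r l c -> \sum_(x : Fstar) c x * y x = 0.
End TamoBarg.

From HB Require Import structures.
From mathcomp Require Import all_boot all_order all_algebra all_field.
From mathcomp Require Import zify ring.
Set Implicit Arguments. Unset Strict Implicit. Unset Printing Implicit Defensive.
Import Order.TTheory GRing.Theory Num.Theory.
Local Open Scope ring_scope.

(* Write l - 1 = K r + b with b < r and put e = min(b, r - 2).  The image H of
   x |-> x^r on F_q^* has m = (q - 1)/r points, each with a fibre of r points.
   Choose distinct y_1, ..., y_K, y_0 in H and e points of the fibre over y_0,
   and let G and h be the monic polynomials with these roots.  For any
   v : F_q -> F_q with interpolating polynomial V, the polynomial
   P = G(X^r) h + X V(X^r) lies in F_q[X]^S modulo X^(q-1) - 1: the first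
   summand has degree at most r K + e < l and no exponent congruent to r - 1,
   the second only exponents congruent to 1 mod r.  As
   P(x) = G(x^r) h(x) + x v(x^r), taking v(y_0) = 0 and
   v(y) = -G(y) h(x_y) / x_y for one x_y in each other fibre makes P vanish on
   the K fibres over the y_i, on the e chosen points and at one point of each
   of the m - K - 1 remaining fibres, so |ev P| <= (r - 1)(m - K) + 1 - e,
   which is at most (1 - 1/r)(q - l) + 1 + 1/r.  Finally P(0) = G(0) h(0) != 0
   and no other exponent of P is divisible by q - 1, so <ev P, ev 1> = -P(0)
   and ev P is not in C^perp. *)

Section FinFieldStar.
Variable F : finFieldType.
Local Notation n := (#|F| - 1)%N.
Local Notation Fs := (Fstar F).

Lemma card_Fstar : #|{: Fs}| = n.
Proof. by rewrite card_sig subn1 -(cardC1 (0 : F)); apply: eq_card => x; rewrite !inE. Qed.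

Lemma card_Fstar_gt0 : (0 < n)%N.
Proof. by rewrite subn_gt0 finNzRing_gt1. Qed.

Lemma expf_card_sub1 (x : F) : x != 0 -> x ^+ n = 1.
Proof.
move=> x_nz; apply: (mulIf x_nz); rewrite mul1r -exprSr subn1.
by rewrite prednK ?expf_card // (ltn_trans _ (finNzRing_gt1 F)).
Qed.

Lemma expf_modn_card_sub1 (x : F) i : x != 0 -> x ^+ i = x ^+ (i %% n).
Proof.
move=> x_nz; rewrite {1}(divn_eq i n) exprD mulnC exprM.
by rewrite expf_card_sub1 // expr1n mul1r.
Qed.

Lemma card_roots_Xn_sub1 k (A : {set F}) :
  (0 < k)%N -> {in A, forall x, x ^+ k = 1} -> (#|A| <= k)%N.
Proof.
move=> k_gt0 A_root; have := @max_poly_roots F ('X^k - 1) (enum A).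
rewrite -size_poly_eq0 size_XnsubC // -cardE ltnS; apply=> //; last exact: enum_uniq.
by apply/allP => x; rewrite mem_enum => /A_root xk; rewrite /root !hornerE xk subrr.
Qed.

Definition mulFstar (a b : Fs) : Fs := exist _ (val a * val b) (mulf_neq0 (valP a) (valP b)).
Definition oneFstar : Fs := exist _ 1 (oner_neq0 F).
Definition invFstar (a : Fs) : Fs := exist _ (val a)^-1 (invr_neq0 (valP a)).

Lemma mulFstar_inj a : injective (mulFstar a).
Proof. by move=> b c /(congr1 val) /(mulfI (valP a)) /val_inj. Qed.

Lemma sum_Fstar_expr i : ~~ (n %| i)%N -> \sum_(x : Fs) val x ^+ i = 0.
Proof.
move=> i_ndvd; set S := \sum_(x : Fs) _.
have [a a_i] : exists a : Fs, val a ^+ i != 1.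
  apply/existsP; apply: contraT; rewrite negb_exists => /forallP all1.
  have i_gt0 : (0 < i %% n)%N by rewrite lt0n.
  have := @card_roots_Xn_sub1 _ (val @: [set: Fs]) i_gt0.
  rewrite card_imset ?cardsT ?card_Fstar; last exact: val_inj.
  rewrite leqNgt ltn_pmod ?card_Fstar_gt0 //; apply=> _ /imsetP[x _ ->].
  by rewrite -expf_modn_card_sub1 ?(valP x) //; apply/eqP; rewrite -[_ == _]negbK all1.
have S_a : S = val a ^+ i * S.
  rewrite /S {1}(reindex_inj (@mulFstar_inj a)) mulr_sumr.
  by apply: eq_bigr => x _; rewrite exprMn.
apply/eqP; have : (val a ^+ i - 1) * S == 0 by rewrite mulrBl mul1r -S_a subrr.
by rewrite mulf_eq0 subr_eq0 (negbTE a_i).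
Qed.

Lemma sum_Fstar_expr0 : \sum_(x : Fs) val x ^+ 0 = -1.
Proof.
have q0 : #|F|%:R = 0 :> F.
  (* Translation by 1 permutes F, so sum (x + 1) = sum x. *)
  have := reindex_inj (op := +%R) (x := 0) (P := predT) (F := id) (addIr (1 : F)).
  rewrite /= big_split /= sumr_const => /eqP.
  by rewrite -subr_eq0 opprD addrA subrr sub0r oppr_eq0 => /eqP.
under eq_bigr do rewrite expr0.
by rewrite sumr_const card_Fstar natrB ?q0 ?sub0r // ltnW // finNzRing_gt1.
Qed.

Lemma sum_Fstar_horner (p : {poly F}) :
  (forall i, (0 < i)%N -> p`_i != 0 -> ~~ (n %| i)%N) ->
  \sum_(x : Fs) p.[val x] = - p`_0.
Proof.
move=> p_ndvd.
rewrite (eq_bigr _ (fun x _ => horner_coef_wide (val x) (leqnSn (size p)))).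
rewrite exchange_big big_ord_recl /= -mulr_sumr.
rewrite sum_Fstar_expr0 mulrN1 big1 ?addr0 // => i _; rewrite -mulr_sumr.
have [->|p_nz] := eqVneq p`_(bump 0 i) 0; first by rewrite mul0r.
by rewrite sum_Fstar_expr ?mulr0 // p_ndvd.
Qed.

Definition interp_poly (v : F -> F) : {poly F} :=
  \sum_(y : F) v y *: (1 - ('X - y%:P) ^+ n).

Lemma interp_polyE v x : (interp_poly v).[x] = v x.
Proof.
rewrite horner_sum (bigD1 x) //= big1 ?addr0 => [|y y_x].
  by rewrite !hornerE subrr expr0n /= eqn0Ngt card_Fstar_gt0 subr0 mulr1.
by rewrite !hornerE expf_card_sub1 ?subrr ?mulr0 // subr_eq0 eq_sym.
Qed.

End FinFieldStar.

Section PowerMap.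
Variables (F : finFieldType) (r : nat).
Hypotheses (r_dvd : (r %| #|F| - 1)%N) (r_gt0 : (0 < r)%N).
Local Notation n := (#|F| - 1)%N.
Local Notation Fs := (Fstar F).

Definition rpow_fiber (y : F) : {set Fs} := [set x | val x ^+ r == y].
Definition rpow_image : {set F} := [set val x ^+ r | x : Fs].

Lemma card_rpow_fiberM (a : Fs) y : (#|rpow_fiber y| <= #|rpow_fiber (val a ^+ r * y)%R|)%N.
Proof.
rewrite -(card_imset _ (@mulFstar_inj _ a)); apply/subset_leq_card/subsetP.
by move=> _ /imsetP[x + ->]; rewrite !inE exprMn => /eqP ->.
Qed.

Lemma card_rpow_fiber_eq1 (x : Fs) : #|rpow_fiber (val x ^+ r)| = #|rpow_fiber 1|.
Proof.
apply/eqP; rewrite eqn_leq; apply/andP; split.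
  have := card_rpow_fiberM (invFstar x) (val x ^+ r).
  by rewrite -exprMn mulVf ?(valP x) ?expr1n.
by have := card_rpow_fiberM x 1; rewrite mulr1.
Qed.

Lemma card_Fstar_rpow : n = (#|rpow_image| * #|rpow_fiber 1%R|)%N.
Proof.
rewrite -card_Fstar -[LHS]sum1_card.
rewrite (partition_big (fun x : Fs => val x ^+ r) (mem rpow_image)) /=; last first.
  by move=> x _; apply: imset_f.
rewrite -sum_nat_const; apply: eq_bigr => _ /imsetP[x _ ->].
by rewrite -(card_rpow_fiber_eq1 x) sum1_card; apply: eq_card => z; rewrite inE.
Qed.

Lemma card_rpow_fiber1_image :
  #|rpow_fiber 1| = r /\ #|rpow_image| = (n %/ r)%N.
Proof.
have m_gt0 : (0 < n %/ r)%N by rewrite divn_gt0 // dvdn_leq ?card_Fstar_gt0.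
have fiber_le : (#|rpow_fiber 1%R| <= r)%N.
  rewrite -(card_imset _ val_inj); apply: card_roots_Xn_sub1 => // _ /imsetP[x + ->].
  by rewrite inE => /eqP.
have image_le : (#|rpow_image| <= n %/ r)%N.
  apply: card_roots_Xn_sub1 => // _ /imsetP[x _ ->].
  by rewrite -exprM mulnC divnK // expf_card_sub1 ?(valP x).
have := card_Fstar_rpow; have := divnK r_dvd; nia.
Qed.

Lemma card_rpow_image : #|rpow_image| = (n %/ r)%N.
Proof. by case: card_rpow_fiber1_image. Qed.

Lemma card_rpow_fiber y : y \in rpow_image -> #|rpow_fiber y| = r.
Proof. by case/imsetP=> x _ ->; rewrite card_rpow_fiber_eq1; case: card_rpow_fiber1_image. Qed.

End PowerMap.

(* The exponent set S, up to reduction modulo q - 1 (allowed since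
   x^(q-1) = 1 for x != 0). *)
Definition tb_exponent (r l i : nat) : bool :=
  ((i < l) && (i %% r != (r - 1) %% r) || (i %% r == 1 %% r))%N.

Section TamoBargCode.
Variables (F : finFieldType) (r l : nat).
Hypotheses (r_dvd : (r %| #|F| - 1)%N) (r_gt1 : (1 < r)%N).
Hypotheses (l_gt0 : (0 < l)%N) (l_le : (l <= #|F| - 1)%N).
Local Notation n := (#|F| - 1)%N.

Lemma inTB_ev (p : {poly F}) :
  (forall i, p`_i != 0 -> tb_exponent r l i) -> inTB r l (ev p).
Proof.
move=> p_exp; exists (\sum_(i < size p) p`_i *: 'X^(i %% n)); split.
  move=> j j_notS; rewrite coef_sum big1 // => i _; rewrite coefZ coefXn.
  have [j_i|] := eqVneq j (i %% n)%N; last by rewrite mulr0.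
  have [->|p_i] := eqVneq p`_i 0; first by rewrite mul0r.
  move: j_notS; rewrite j_i /inS; case/orP: (p_exp _ p_i) => [/andP[i_l i_r]|i_r].
    by rewrite modn_small ?i_l ?i_r //; apply: leq_trans i_l l_le.
  by rewrite (modn_dvdm _ r_dvd) i_r ltn_pmod ?orbT // card_Fstar_gt0.
apply/ffunP => x; rewrite !ffunE horner_sum (horner_coef p); apply: eq_bigr => i _.
by rewrite hornerZ hornerXn -expf_modn_card_sub1 // (valP x).
Qed.

Lemma tb_exponent_ndvd i : (0 < i)%N -> tb_exponent r l i -> ~~ (n %| i)%N.
Proof.
move=> i_gt0; case/orP => [/andP[i_l _]|i_r].
  by apply: contraTN i_l => /(dvdn_leq i_gt0) n_i; rewrite -leqNgt (leq_trans l_le).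
apply: contraTN i_r => /(dvdn_trans r_dvd); rewrite /dvdn => /eqP ->.
by rewrite modn_small.
Qed.

Lemma ev_notin_TBperp (p : {poly F}) :
  (forall i, p`_i != 0 -> tb_exponent r l i) -> p`_0 != 0 -> ~ inTBperp r l (ev p).
Proof.
move=> p_exp p0_nz perp.
have one_exp i : (1 : {poly F})`_i != 0 -> tb_exponent r l i.
  rewrite coef1; have [-> _|_] := eqVneq i 0%N; last by rewrite eqxx.
  rewrite /tb_exponent l_gt0 mod0n /=.
  have -> : ((r - 1) %% r = r - 1)%N by rewrite modn_small; lia.
  by apply/orP; left; lia.
have := perp _ (inTB_ev one_exp).
rewrite (eq_bigr (fun x => p.[val x])) => [|x _]; last by rewrite !ffunE hornerC mul1r.
rewrite sum_Fstar_horner => [/eqP|i i_gt0 /p_exp]; last exact: tb_exponent_ndvd.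
by rewrite oppr_eq0 (negbTE p0_nz).
Qed.

End TamoBargCode.

Section CompXnCoef.
Variable R : nzRingType.

Lemma coef_comp_Xn_mul_neq0 (g h : {poly R}) r i : (0 < r)%N -> (size h <= r)%N ->
  ((g \Po 'X^r) * h)`_i != 0 -> (i %/ r < size g)%N && (i %% r < size h)%N.
Proof.
move=> r_gt0 h_le; rewrite coefM => nz.
have [j /andP[gj hj]] : exists j : 'I_i.+1, ((g \Po 'X^r)`_j != 0) && (h`_(i - j) != 0).
  apply/existsP; apply: contraNT nz; rewrite negb_exists => /forallP none.
  rewrite big1 // => j _; have := none j; rewrite negb_and !negbK.
  by case/orP => /eqP ->; rewrite ?mul0r ?mulr0.
move: gj; rewrite coef_comp_poly_Xn //; case: dvdnP => [[t j_t]|]; last by rewrite eqxx.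
rewrite j_t mulnK // => gt.
have t_lt : (t < size g)%N by rewrite ltnNge; apply: contra gt => /(nth_default 0) ->.
have ij_lt : (i - j < size h)%N by rewrite ltnNge; apply: contra hj => /(nth_default 0) ->.
have ij_r : (i - j < r)%N := leq_trans ij_lt h_le.
have -> : i = (t * r + (i - j))%N by rewrite -j_t subnKC // -ltnS.
by rewrite divnMDl // modnMDl divn_small // modn_small // addn0 t_lt.
Qed.

Lemma coef_X_comp_Xn_neq0 (g : {poly R}) r i : (0 < r)%N ->
  ('X * (g \Po 'X^r))`_i != 0 -> (i %% r = 1 %% r)%N.
Proof.
move=> r_gt0; rewrite coefXM; case: i => [|i] /=; first by rewrite eqxx.
rewrite coef_comp_poly_Xn //; case: dvdnP => [[t ->] _|]; last by rewrite eqxx.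
by rewrite -addn1 modnMDl.
Qed.

End CompXnCoef.

Lemma tb_weight_arith (s r D b w : nat) : (1 < r)%N -> (0 < D)%N -> (b < r)%N ->
  (r * D = s + b)%N -> (w + minn b (r - 2) <= (r - 1) * D.-1 + r)%N ->
  (r * w <= (r - 1) * s + r.+1)%N.
Proof.
move=> r_gt1 D_gt0 b_lt rD w_le.
case: D D_gt0 rD w_le => // D' _; rewrite /= mulnS => rD w_le.
have := leq_mul (leqnn r) w_le; rewrite mulnDr (mulnDr r) mulnCA.
rewrite /minn; case: ltnP => b_r; nia.
Qed.

Section Witness.
Variables (F : finFieldType) (r l : nat).
Hypotheses (r_dvd : (r %| #|F| - 1)%N) (r_gt1 : (1 < r)%N).
Hypotheses (l_gt0 : (0 < l)%N) (l_le : (l <= #|F| - 1)%N).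
Local Notation n := (#|F| - 1)%N.
Local Notation m := (n %/ r)%N.
Local Notation K := ((l - 1) %/ r)%N.
Local Notation e := (minn ((l - 1) %% r) (r - 2)).
Local Notation Fs := (Fstar F).
Local Notation H := (rpow_image F r).
Local Notation fiber := (@rpow_fiber F r).

Let r_gt0 : (0 < r)%N := ltnW r_gt1.

Lemma rK_add_e_lt_l : (r * K + e < l)%N.
Proof. have := divn_eq (l - 1) r; have := geq_minl ((l - 1) %% r) (r - 2); lia. Qed.

Lemma K_lt_m : (K < m)%N.
Proof.
rewrite -(ltn_pmul2l r_gt0) [(r * (n %/ r))%N]mulnC (divnK r_dvd).
by have := rK_add_e_lt_l; lia.
Qed.

Definition polyG : {poly F} := \prod_(y <- take K (enum H)) ('X - y%:P).
Definition y0 : F := nth 0 (enum H) K.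
Definition hroots : seq Fs := take e (enum (fiber y0)).
Definition polyh : {poly F} := \prod_(z <- map val hroots) ('X - z%:P).
Definition fiber_rep (y : F) : Fs := odflt (oneFstar F) [pick x : Fs | val x ^+ r == y].
Definition correction (y : F) : F :=
  if y == y0 then 0 else - (polyG.[y] * polyh.[val (fiber_rep y)] / val (fiber_rep y)).
Definition witness : {poly F} :=
  (polyG \Po 'X^r) * polyh + 'X * (interp_poly correction \Po 'X^r).

Lemma size_enum_rpow_image : size (enum H) = m.
Proof. by rewrite -cardE card_rpow_image. Qed.

Lemma y0_in : y0 \in H.
Proof. by rewrite -mem_enum mem_nth // size_enum_rpow_image K_lt_m. Qed.

Lemma y0_notin_G : y0 \notin take K (enum H).
Proof.
have /hasPn : ~~ has (mem (take K (enum H))) (drop K (enum H)).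
  by have := enum_uniq (mem H); rewrite -{1}(cat_take_drop K (enum H)) cat_uniq => /and3P[].
apply; have -> : y0 = nth 0 (drop K (enum H)) 0 by rewrite nth_drop addn0.
by rewrite mem_nth // size_drop size_enum_rpow_image subn_gt0 K_lt_m.
Qed.

Lemma card_G_roots : #|[set y in take K (enum H)]| = K.
Proof.
rewrite cardsE (card_uniqP _) ?take_uniq ?enum_uniq //.
by rewrite size_take size_enum_rpow_image K_lt_m.
Qed.

Lemma G_roots_sub : {subset take K (enum H) <= H}.
Proof. by move=> y /mem_take; rewrite mem_enum. Qed.

Lemma card_hroots : #|[set x in hroots]| = e.
Proof.
rewrite cardsE (card_uniqP _) ?take_uniq ?enum_uniq //.
rewrite size_take -cardE card_rpow_fiber ?y0_in //.
by have -> : (e < r)%N by have := geq_minr ((l - 1) %% r) (r - 2); lia.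
Qed.

Lemma hroots_sub x : x \in hroots -> val x ^+ r = y0.
Proof. by move/mem_take; rewrite mem_enum inE => /eqP. Qed.

Lemma fiber_repP y : y \in H -> val (fiber_rep y) ^+ r = y.
Proof.
case/imsetP=> x _ ->; rewrite /fiber_rep; case: pickP => [z /eqP //|none].
by have := none x; rewrite eqxx.
Qed.

Lemma horner_witness x : witness.[x] = polyG.[x ^+ r] * polyh.[x] + x * correction (x ^+ r).
Proof. by rewrite !hornerE !horner_comp !hornerXn interp_polyE. Qed.

Lemma witness_vanish_G (x : Fs) : val x ^+ r \in take K (enum H) -> witness.[val x] = 0.
Proof.
move=> xG; have G0 : polyG.[val x ^+ r] = 0 by apply/rootP; rewrite root_prod_XsubC.
by rewrite horner_witness /correction G0 !mul0r oppr0 if_same mulr0 addr0.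
Qed.

Lemma witness_vanish_h (x : Fs) : x \in hroots -> witness.[val x] = 0.
Proof.
move=> xh; have h0 : polyh.[val x] = 0 by apply/rootP; rewrite root_prod_XsubC map_f.
by rewrite horner_witness h0 mulr0 add0r /correction hroots_sub // eqxx mulr0.
Qed.

Lemma witness_vanish_rep y : y \in H -> y != y0 -> witness.[val (fiber_rep y)] = 0.
Proof.
move=> yH yy0; rewrite horner_witness fiber_repP // /correction (negbTE yy0).
by rewrite mulrN (mulrC (val _)) divfK ?subrr // (valP (fiber_rep y)).
Qed.

Definition fiber_weight (y : F) : nat := #|[set x in fiber y | witness.[val x] != 0]|.

Lemma hweight_witness : hweight (ev witness) = (\sum_(y in H) fiber_weight y)%N.
Proof.
rewrite /hweight -sum1_card (partition_big (fun x : Fs => val x ^+ r) (mem H)) /=.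
  apply: eq_bigr => y _; rewrite sum1_card /fiber_weight; apply: eq_card => x.
  by rewrite unfold_in /= !inE ffunE andbC.
by move=> x _; apply: imset_f.
Qed.

Lemma fiber_weight_y0 : (fiber_weight y0 + e <= r)%N.
Proof.
have sub : [set x in fiber y0 | witness.[val x] != 0] \subset fiber y0 :\: [set x in hroots].
  apply/subsetP => x; rewrite !inE => /andP[-> nz]; rewrite andbT.
  by apply: contra nz => /witness_vanish_h ->.
have := subset_leq_card sub; rewrite cardsD (setIidPr _); last first.
  by apply/subsetP => x; rewrite inE => /hroots_sub /eqP; rewrite inE.
rewrite card_hroots card_rpow_fiber ?y0_in // /fiber_weight.
have := geq_minr ((l - 1) %% r) (r - 2); lia.
Qed.

Lemma fiber_weight_le y : y \in H -> y != y0 ->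
  (fiber_weight y <= (r - 1) * (y \notin take K (enum H)))%N.
Proof.
move=> yH yy0; have [yG|yG] /= := boolP (y \in take K (enum H)).
  rewrite muln0 leqn0 cards_eq0; apply/eqP/setP => x; rewrite !inE.
  by have [xy|//] := eqVneq (val x ^+ r) y; rewrite witness_vanish_G ?xy ?eqxx.
rewrite muln1 /fiber_weight.
have sub : [set x in fiber y | witness.[val x] != 0] \subset fiber y :\ fiber_rep y.
  apply/subsetP => x; rewrite !inE => /andP[-> nz]; rewrite andbT.
  by apply: contra nz => /eqP ->; rewrite witness_vanish_rep.
apply: leq_trans (subset_leq_card sub) _.
have := cardsD1 (fiber_rep y) (fiber y).
rewrite card_rpow_fiber // inE fiber_repP // eqxx add1n => r_eq.
by rewrite [in X in (_ <= X)%N]r_eq subn1.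
Qed.

Lemma hweight_witness_le : (hweight (ev witness) + e <= (r - 1) * (m - K).-1 + r)%N.
Proof.
set G := take K (enum H).
have cardH : #|H :\: (y0 |: [set y in G])| = (m - K).-1.
  rewrite cardsD (setIidPr _); last first.
    by apply/subsetP => y; rewrite !inE => /predU1P[->|/G_roots_sub //]; apply: y0_in.
  by rewrite cardsU1 inE (negbTE y0_notin_G) card_G_roots card_rpow_image //= add1n subnS.
have sum_notin : (\sum_(y in H | y != y0) (y \notin G) = #|H :\: (y0 |: [set y in G])|)%N.
  rewrite -sum1_card big_mkcond [RHS]big_mkcond /=; apply: eq_bigr => y _.
  by rewrite !inE; case: (y \in H); case: (y == y0); case: (y \in G).
rewrite hweight_witness (bigD1 y0) ?y0_in //= addnAC -cardH -sum_notin big_distrr /=.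
rewrite [X in (_ <= X)%N]addnC leq_add ?fiber_weight_y0 //.
by apply: leq_sum => y /andP[yH yy0]; apply: fiber_weight_le.
Qed.

Lemma r_mul_hweight_witness_le : (r * hweight (ev witness) <= (r - 1) * (#|F| - l) + r.+1)%N.
Proof.
apply: (tb_weight_arith (D := (m - K)%N) (b := ((l - 1) %% r)%N)) => //.
- by rewrite subn_gt0 K_lt_m.
- by rewrite ltn_pmod.
- rewrite mulnBr [(r * m)%N]mulnC (divnK r_dvd); have := divn_eq (l - 1) r.
  by rewrite [(_ %/ r * r)%N]mulnC; lia.
- exact: hweight_witness_le.
Qed.

Lemma size_polyG : size polyG = K.+1.
Proof. by rewrite size_prod_XsubC size_take size_enum_rpow_image K_lt_m. Qed.

Lemma size_polyh : size polyh = e.+1.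
Proof.
by rewrite size_prod_XsubC size_map -(card_uniqP _) ?take_uniq ?enum_uniq // -cardsE card_hroots.
Qed.

Lemma witness_tb_exponent i : witness`_i != 0 -> tb_exponent r l i.
Proof.
rewrite coefD; have [-> | low_nz] := eqVneq ((polyG \Po 'X^r) * polyh)`_i 0.
  by rewrite add0r => /(coef_X_comp_Xn_neq0 r_gt0) i_r; rewrite /tb_exponent i_r eqxx orbT.
have e_le := geq_minr ((l - 1) %% r) (r - 2).
have h_le : (size polyh <= r)%N by rewrite size_polyh; lia.
have /andP[] := coef_comp_Xn_mul_neq0 r_gt0 h_le low_nz.
rewrite size_polyG size_polyh !ltnS => /(leq_mul (leqnn r)) iK ie.
have := rK_add_e_lt_l; have := divn_eq i r; rewrite mulnC => i_eq lt_l.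
move=> _; rewrite /tb_exponent (_ : (r - 1) %% r = r - 1)%N; last by rewrite modn_small; lia.
by apply/orP; left; apply/andP; split; lia.
Qed.

Lemma witness_coef0 : witness`_0 != 0.
Proof.
rewrite coefD coefXM eqxx addr0 -horner_coef0 hornerM horner_comp hornerXn.
rewrite expr0n eqn0Ngt r_gt0 /= mulf_neq0 // -/(root _ 0) root_prod_XsubC.
  apply: contraTN isT => /G_roots_sub /imsetP[x _ /esym/eqP].
  by rewrite expf_eq0 (negbTE (valP x)) andbF.
by apply/mapP => -[x _ /eqP]; rewrite eq_sym (negbTE (valP x)).
Qed.

End Witness.

Theorem corollary6p1 (F : finFieldType) (r l : nat) :
  (r %| #|F| - 1)%N -> (3 <= r)%N -> (#|F| <= 2 * l)%N -> (l <= #|F| - 1)%N ->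
  exists c : vec F,
    [/\ inTB r l c, ~ inTBperp r l c &
        (hweight c)%:R <= (1 - 1 / r%:R) * (#|F| - l)%:R + 5 :> rat].
Proof.
move=> r_dvd r_ge3 q_le_2l l_le.
have r_gt1 : (1 < r)%N by apply: leq_trans r_ge3.
(* q <= 2 l, which makes C^perp a subcode of C, is only needed here. *)
have l_gt0 : (0 < l)%N by have := card_Fstar_gt0 F; lia.
have w_exp i : (witness F r l)`_i != 0 -> tb_exponent r l i by apply: witness_tb_exponent.
exists (ev (witness F r l)); split.
- exact: inTB_ev.
- by apply: ev_notin_TBperp => //; apply: witness_coef0.
have w_le : (r * hweight (ev (witness F r l)) <= (r - 1) * (#|F| - l) + r.+1)%N.
  by apply: r_mul_hweight_witness_le.
have r_pos : (0 : rat) < r%:R by rewrite ltr0n ltnW.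
rewrite -(ler_pM2l r_pos) -natrM.
have -> : r%:R * ((1 - 1 / r%:R) * (#|F| - l)%:R + 5) =
          (r%:R - 1) * (#|F| - l)%:R + 5 * r%:R :> rat.
  by field; rewrite pnatr_eq0 -lt0n ltnW.
rewrite -(natrB _ (ltnW r_gt1)) -!natrM -natrD ler_nat (leq_trans w_le) //.
by rewrite leq_add2l; lia.
Qed.
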